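(* Let $P$ be a finite $(3+1)$-free poset, $C,D$ chains of $P$, and $H$ a ladder of $(C,D)$. Then (i) $H$, as an induced subgraph of $\mathrm{inc}_P(C,D)$, is either a 4-cycle or a path; and (ii) $|H\cap C|$ and $|H\cap D|$ differ by at most 1.
   Context: $a\sim_Pb$ means $a,b$ incomparable or equal. For chains $C,D$ of $P$ (not necessarily disjoint), $\mathrm{inc}_P(C,D)$ is the bipartite graph with partite sets $C$ and $D$ (taken as a disjoint union) whose edges are pairs $c\in C$, $d\in D$ with $c\sim_Pd$. A ladder of $(C,D)$ is a connected component of $\mathrm{inc}_P(C,D)$, identified with its vertex set in $C\sqcup D$. $(3+1)$-free: no induced 3-chain plus disjoint point. *)

From mathcomp Require Import all_boot all_order.
Set Implicit Arguments. Unset Strict Implicit. Unset Printing Implicit Defensive.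
Import Order.TTheory.
Local Open Scope order_scope.

Section Ladders.
Variables (disp : Order.disp_t) (T : finPOrderType disp).

Definition simP (a b : T) : bool := (a == b) || ~~ (a >=< b).

Definition free31 : Prop :=
  ~ exists a b c d : T,
      [/\ a < b, b < c & [&& ~~ (d >=< a), ~~ (d >=< b) & ~~ (d >=< c)]].

Definition is_chain (C : {set T}) : Prop :=
  forall x y, x \in C -> y \in C -> x >=< y.

(* vertices of inc_P(C,D): disjoint union, inl = copy in C, inr = copy in D *)
Definition incV (C D : {set T}) : {set T + T} :=
  [set inl c | c in C] :|: [set inr d | d in D].

Definition incE (u v : T + T) : bool :=
  match u, v with
  | inl c, inr d => simP c d
  | inr d, inl c => simP c d
  | _, _ => false
  end.

Definition incRel (C D : {set T}) : rel (T + T) :=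
  fun u v => [&& u \in incV C D, v \in incV C D & incE u v].

Definition is_ladder (C D : {set T}) (H : {set T + T}) : Prop :=
  exists2 x, x \in incV C D &
    H = [set y in incV C D | connect (incRel C D) x y].

Definition HC (H : {set T + T}) : {set T} := [set c | inl c \in H].
Definition HD (H : {set T + T}) : {set T} := [set d | inr d \in H].
End Ladders.

Definition seq_adj {V : eqType} (s : seq V) (x y : V) : bool :=
  ((x, y) \in zip s (behead s)) || ((y, x) \in zip s (behead s)).

Definition cyc_adj {V : eqType} (s : seq V) (x y : V) : bool :=
  match s with
  | [::] => false
  | a :: _ => let t := rcons s a in
              ((x, y) \in zip t (behead t)) || ((y, x) \in zip t (behead t))
  end.

Definition induces_path {V : finType} (e : rel V) (H : {set V}) : Prop :=
  exists s : seq V, [/\ s != [::], uniq s, s =i H &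
    {in H &, forall x y, e x y = seq_adj s x y}].

Definition induces_C4 {V : finType} (e : rel V) (H : {set V}) : Prop :=
  exists s : seq V, [/\ size s = 4, uniq s, s =i H &
    {in H &, forall x y, e x y = cyc_adj s x y}].

From mathcomp Require Import all_boot all_order.
From mathcomp Require Import zify.
Set Implicit Arguments. Unset Strict Implicit. Unset Printing Implicit Defensive.
Import Order.TTheory.

(* A vertex of inc_P(C,D) has at most two neighbours: among three elements of a
   chain that are all ~ p there are a < b < c, and since a ~ p and c ~ p, the
   element p is incomparable to each of a, b, c, a (3+1).  So a ladder is a
   connected graph of maximum degree two whose edges alternate between the two
   copies.  If some vertex has degree at most one, the greedy walk from it is an
   induced path exhausting the ladder, and alternation balances the two sides.
   Otherwise the ladder is 2-regular; its largest C-vertex cm has neighbours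
   d1, d2 whose other neighbours lie below cm, and (3+1)-freeness forces these
   to coincide, so the ladder is a 4-cycle. *)

Lemma count_alternating (A : Type) (p : pred A) x s :
  path (fun u v => p u != p v) x s -> count p (x :: s) = uphalf (size s + p x).
Proof.
elim: s x => [|y s IHs] x /=; first by case: (p x).
case/andP => pxy /IHs /= ->.
by case: (p x) (p y) pxy => [] [] //=; rewrite ?addn0 ?addn1.
Qed.

Lemma count_alternating_balanced (A : Type) (p : pred A) x s :
  path (fun u v => p u != p v) x s ->
  count p (x :: s) <= (count (predC p) (x :: s)).+1 /\
  count (predC p) (x :: s) <= (count p (x :: s)).+1.
Proof.
move=> alt; have altC : path (fun u v => predC p u != predC p v) x s.
  by apply: sub_path alt => u v /=; rewrite (inj_eq negb_inj).
rewrite !count_alternating //=.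
by case: (p x); rewrite /= addn0 addn1 uphalf_half; case: (odd _) => /=; lia.
Qed.

Section SeqAdjacency.
Variable V : eqType.
Implicit Types (s t : seq V) (x y u v w : V).

Lemma seq_adjC s x y : seq_adj s x y = seq_adj s y x.
Proof. by rewrite /seq_adj orbC. Qed.

Lemma mem_zip_pair (s1 s2 : seq V) a b :
  (a, b) \in zip s1 s2 -> (a \in s1) && (b \in s2).
Proof.
elim: s1 s2 => [|c s1 IHs] [|d s2] //=; rewrite !in_cons xpair_eqE.
by case/orP => [/andP [-> ->] | /IHs /andP [-> ->]]; rewrite ?orbT.
Qed.

Lemma seq_adj_mem s x y : seq_adj s x y -> y \in s.
Proof. by case/orP => /mem_zip_pair /andP [] // _ /mem_behead. Qed.

Lemma seq_adj_rcons x t w a b :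
  seq_adj (x :: rcons t w) a b =
  [|| seq_adj (x :: t) a b, (a == last x t) && (b == w)
    | (b == last x t) && (a == w)].
Proof.
have zipE : zip (x :: rcons t w) (rcons t w) = rcons (zip (x :: t) t) (last x t, w).
  by elim: t x => [|y t IHt] x //=; rewrite IHt.
rewrite /seq_adj /= zipE !mem_rcons !in_cons !xpair_eqE.
by case: (_ \in _); case: (_ \in _); rewrite /= ?orbT ?orbF //; case: (_ && _).
Qed.

Lemma seq_adj_path (e : rel V) x s a b :
  symmetric e -> path e x s -> seq_adj (x :: s) a b -> e a b.
Proof.
move=> e_sym ex_s; suff zip_e u v : (u, v) \in zip (x :: s) s -> e u v.
  by case/orP => /zip_e //; rewrite e_sym.
elim: s x ex_s => [|y s IHs] x //= /andP [exy ey_s].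
by rewrite in_cons xpair_eqE => /orP [/andP [/eqP -> /eqP ->] // | /IHs]; apply.
Qed.

End SeqAdjacency.

Section MaximalInducedPath.
Variables (V : finType) (e : rel V).
Hypotheses (e_sym : symmetric e) (e_irr : irreflexive e).
Hypothesis deg_le2 : forall v, #|[set w | e v w]| <= 2.
Variable v0 : V.
Hypothesis deg_v0 : #|[set w | e v0 w]| <= 1.

Lemma nbr3_eq v a b c : e v a -> e v b -> e v c -> a != b -> a != c -> b = c.
Proof.
move=> ea eb ec ab ac; apply/eqP/negP => /negP bc.
move: (deg_le2 v); rewrite leqNgt => /negP; apply; apply/card_gt2P.
by exists a, b, c; rewrite !inE ea eb ec (eq_sym c).
Qed.

Lemma nbr_v0_eq a b : e v0 a -> e v0 b -> a = b.
Proof.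
move=> ea eb; have /card_le1P le1 := deg_v0.
by apply/esym/eqP; rewrite -[_ == _]/(b \in pred1 a) -le1 ?inE.
Qed.

Definition saturated_path (t : seq V) :=
  [/\ uniq (v0 :: t), path e v0 t &
      {in v0 :: t, forall x, x != last v0 t ->
         forall y, e x y -> seq_adj (v0 :: t) x y}].

Lemma saturated_path0 : saturated_path [::].
Proof. by split=> // x; rewrite inE => /eqP ->; rewrite eqxx. Qed.

Lemma saturated_path_last_nbr t w y : saturated_path t ->
  e (last v0 t) w -> e (last v0 t) y -> w \notin v0 :: t -> y \notin v0 :: t ->
  w = y.
Proof.
case: (lastP t) => [|t' l] [_ path_t _]; first by move=> ew ey _ _; apply: nbr_v0_eq.
rewrite last_rcons => ew ey wt yt.
have ep : e l (last v0 t') by rewrite e_sym; move: path_t; rewrite rcons_path => /andP [].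
have pt : last v0 t' \in v0 :: rcons t' l.
  by rewrite -rcons_cons mem_rcons in_cons mem_last orbT.
by apply: (nbr3_eq ep ew ey); [move: wt | move: yt]; apply: contraNneq => <-.
Qed.

Lemma saturated_path_rcons t w : saturated_path t ->
  w \notin v0 :: t -> e (last v0 t) w -> saturated_path (rcons t w).
Proof.
move=> sat_t wt ew; have [uniq_t path_t adj_t] := sat_t.
set l := last v0 t in ew.
have memE u : (u \in v0 :: rcons t w) = (u == w) || (u \in v0 :: t).
  by rewrite -rcons_cons mem_rcons in_cons.
split; first by rewrite -rcons_cons rcons_uniq wt.
  by rewrite rcons_path path_t.
move=> x; rewrite memE last_rcons => /orP [/eqP -> | xt]; first by rewrite eqxx.
move=> _ y exy; rewrite seq_adj_rcons -/l.
have [xl | xl] := eqVneq x l; last by rewrite adj_t.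
rewrite xl in exy *; have [yw | yw] := eqVneq y w; first by rewrite /= orbT.
have yt : y \in v0 :: t.
  by apply: contraNT yw => yt; rewrite (saturated_path_last_nbr sat_t ew exy).
have yl : y != l by apply: contraTneq exy => ->; rewrite e_irr.
by rewrite seq_adjC adj_t // e_sym.
Qed.

Lemma saturated_path_size t : saturated_path t -> size t < #|V|.
Proof.
by case=> uniq_t _ _; rewrite -[(size t).+1]/(size (v0 :: t)) -(card_uniqP uniq_t) max_card.
Qed.

Lemma saturated_path_grow t : saturated_path t ->
  (forall w, e (last v0 t) w -> w \in v0 :: t) \/
  exists w, saturated_path (rcons t w).
Proof.
move=> sat_t; case: (pickP [pred w | e (last v0 t) w & w \notin v0 :: t]).
  by move=> w /andP [ew wt]; right; exists w; apply: saturated_path_rcons.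
by move=> maximal; left => w ew; apply: contraFT (maximal w) => wt; rewrite /= ew.
Qed.

Lemma maximal_saturated_path : exists2 t, saturated_path t &
  forall w, e (last v0 t) w -> w \in v0 :: t.
Proof.
suff grow n t : #|V| - size t <= n -> saturated_path t -> exists2 t', saturated_path t' &
    forall w, e (last v0 t') w -> w \in v0 :: t'.
  exact: (grow _ [::] (leqnn _) saturated_path0).
elim: n t => [|n IHn] t size_t sat_t;
  case: (saturated_path_grow sat_t) => [maximal | [w sat_tw]]; try by exists t.
all: have := saturated_path_size sat_tw; rewrite size_rcons => size_tw.
- lia.
- by apply: (IHn _ _ sat_tw); rewrite size_rcons; lia.
Qed.

Lemma component_induced_path : exists t,
  [/\ path e v0 t, uniq (v0 :: t), v0 :: t =i [set y | connect e v0 y] &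
      {in [set y | connect e v0 y] &, forall x y, e x y = seq_adj (v0 :: t) x y}].
Proof.
have [t [uniq_t path_t adj_t] maximal] := maximal_saturated_path.
have closed_t : closed e (v0 :: t).
  apply: (intro_closed (sym_connect_sym e_sym)) => x y exy xt.
  have [xl | xl] := eqVneq x (last v0 t); first by apply: maximal; rewrite -xl.
  exact: seq_adj_mem (adj_t x xt xl y exy).
have tE : v0 :: t =i [set y | connect e v0 y].
  move=> y; rewrite [in RHS]inE; apply/idP/idP; first exact: path_connect.
  by move/(closed_connect closed_t) <-; rewrite mem_head.
exists t; split=> // x y; rewrite -!tE => xt yt.
apply/idP/idP => [exy | /(seq_adj_path e_sym path_t) //].
have [xl | xl] := eqVneq x (last v0 t); last exact: adj_t.
have yl : y != last v0 t by apply: contraTneq exy => ->; rewrite xl e_irr.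
by rewrite seq_adjC adj_t // e_sym.
Qed.
End MaximalInducedPath.

Section TwoRegular.
Variables (V : finType) (e : rel V).
Implicit Types (u w a b : V).

Lemma deg2_other u a : #|[set w | e u w]| = 2 -> e u a -> exists2 b, e u b & b != a.
Proof.
move/eqP/cards2P => [x [y [xy Nu]]] ua.
have nbrE w : e u w = (w \in [set x; y]) by rewrite -Nu inE.
move: ua; rewrite nbrE !inE => /orP [] /eqP ->.
  by exists y; rewrite ?nbrE ?inE ?eqxx ?orbT // eq_sym.
by exists x; rewrite ?nbrE ?inE ?eqxx.
Qed.

Lemma deg2_nbhd u a b : #|[set w | e u w]| = 2 -> e u a -> e u b -> a != b ->
  [set w | e u w] = [set a; b].
Proof.
move=> deg_u ua ub ab; apply/esym/eqP; rewrite eqEcard cards2 ab deg_u leqnn andbT.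
by apply/subsetP => w; rewrite !inE => /orP [] /eqP ->.
Qed.

End TwoRegular.

Section CompleteBipartite22.
Variables (V : finType) (e : rel V) (a1 a2 b1 b2 : V).
Hypotheses (e_sym : symmetric e) (e_irr : irreflexive e).
Hypotheses (a12 : a1 != a2) (b12 : b1 != b2).
Hypotheses (e11 : e a1 b1) (e12 : e a1 b2) (e21 : e a2 b1) (e22 : e a2 b2).

Lemma K22_uniq : uniq [:: a1; b1; a2; b2].
Proof.
have neq x y : e x y -> x != y by apply: contraTneq => ->; rewrite e_irr.
rewrite /= !inE !negb_or a12 b12 (neq _ _ e11) (neq _ _ e12) (neq _ _ e22).
by rewrite eq_sym (neq _ _ e21).
Qed.

Lemma K22_induces_C4 (H : {set V}) : ~~ e a1 a2 -> ~~ e b1 b2 ->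
  [:: a1; b1; a2; b2] =i H -> induces_C4 e H.
Proof.
move=> na nb SH; have := K22_uniq; rewrite /= !inE !negb_or.
case/and4P => /and3P [n11 _ n12] /andP [n21 _] n22 _.
exists [:: a1; b1; a2; b2]; split=> //; first exact: K22_uniq.
move=> x y; rewrite -!SH !inE.
move=> /or4P [] /eqP -> /or4P [] /eqP ->;
  rewrite /cyc_adj /= !inE !xpair_eqE !eqxx ?e_irr.
all: rewrite ?[b1 == a1]eq_sym ?[b2 == a1]eq_sym ?[a2 == b1]eq_sym
  ?[b2 == a2]eq_sym ?[a2 == a1]eq_sym ?[b2 == b1]eq_sym.
all: rewrite ?(negbTE a12) ?(negbTE b12) ?(negbTE n11) ?(negbTE n12)
  ?(negbTE n21) ?(negbTE n22) /= ?orbF.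
all: rewrite ?[e b1 _]e_sym ?[e b2 _]e_sym ?[e a2 a1]e_sym.
all: by rewrite ?e11 ?e12 ?e21 ?e22 ?(negbTE na) ?(negbTE nb).
Qed.

Lemma K22_component :
  {in [set y | connect e a1 y], forall u, #|[set w | e u w]| = 2} ->
  [:: a1; b1; a2; b2] =i [set y | connect e a1 y].
Proof.
move=> deg2.
have path_S : path e a1 [:: b1; a2; b2] by rewrite /= e11 e_sym e21 e22.
have S_conn y : y \in [:: a1; b1; a2; b2] -> connect e a1 y.
  exact: path_connect.
have deg u : u \in [:: a1; b1; a2; b2] -> #|[set w | e u w]| = 2.
  by move/S_conn => a1u; apply: deg2; rewrite inE.
have [Na1 Na2 Nb1 Nb2] : [/\ [set w | e a1 w] = [set b1; b2],
    [set w | e a2 w] = [set b1; b2], [set w | e b1 w] = [set a1; a2] &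
    [set w | e b2 w] = [set a1; a2]].
  split; apply: deg2_nbhd => //;
    first [by rewrite e_sym | by apply: deg; rewrite !inE eqxx ?orbT].
have nbr_S u : u \in [:: a1; b1; a2; b2] ->
    {subset [set w | e u w] <= [:: a1; b1; a2; b2]}.
  rewrite !inE => /or4P [] /eqP ->; rewrite ?Na1 ?Na2 ?Nb1 ?Nb2 => w;
    by rewrite !inE => /orP [] /eqP ->; rewrite eqxx ?orbT.
have closed_S : closed e [:: a1; b1; a2; b2].
  apply: (intro_closed (sym_connect_sym e_sym)) => u w uw /nbr_S; apply.
  by rewrite inE.
move=> y; rewrite [in RHS]inE; apply/idP/idP; first exact: S_conn.
by move/(closed_connect closed_S) <-; rewrite mem_head.
Qed.

End CompleteBipartite22.

Section Poset.
Variables (disp : Order.disp_t) (T : finPOrderType disp).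
Local Open Scope order_scope.
Implicit Types (a b c p x y z : T) (A : {set T}).

Lemma simPC a b : simP a b = simP b a.
Proof. by rewrite /simP eq_sym comparable_sym. Qed.

Lemma simP_lt a b : a < b -> simP a b = false.
Proof. by move=> ab; rewrite /simP (lt_eqF ab) /Order.comparable (ltW ab). Qed.

Lemma simP_lt_incomparable a c p : a < c -> simP a p -> simP c p ->
  ~~ (p >=< a) /\ ~~ (p >=< c).
Proof.
move=> ac ap cp.
have a_p : a != p by apply: contraTneq cp => <-; rewrite simPC simP_lt.
have c_p : c != p by apply: contraTneq ap => <-; rewrite simP_lt.
by move: ap cp; rewrite /simP (negbTE a_p) (negbTE c_p) !(comparable_sym p).
Qed.

Lemma free31_gap (F : free31 T) a b c p :
  a < b -> b < c -> simP a p -> simP c p -> False.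
Proof.
move=> ab bc ap cp; have [pa pc] := simP_lt_incomparable (lt_trans ab bc) ap cp.
apply: F; exists a, b, c, p; split=> //; rewrite pa pc andbT /=.
apply/negP => /orP [pb | bp].
  by move: pc; rewrite /Order.comparable (le_trans pb (ltW bc)).
by move: pa; rewrite /Order.comparable (le_trans (ltW ab) bp) orbT.
Qed.

Lemma free31_chain_simP_card (F : free31 T) A p :
  is_chain A -> (#|[set x in A | simP x p]| <= 2)%N.
Proof.
move=> chA; rewrite leqNgt; apply/card_gt2P => -[x [y [z []]]].
rewrite !inE => -[/andP [xA xp] /andP [yA yp] /andP [zA zp]].
wlog lt_xy : x y xA yA xp yp / x < y.
  move=> wlog_xy dist; have [xy _ _] := dist.
  case: (comparable_ltgtP (chA x y xA yA)) xy => [lt _ | lt _ | _ //].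
    exact: (wlog_xy x y).
  by apply: (wlog_xy y x) => //; case: dist => *; split; rewrite eq_sym.
move=> [_ yz zx]; rewrite eq_sym in zx.
case: (comparable_ltgtP (chA x z xA zA)) zx => [xz _ | zx _ | _ //].
  case: (comparable_ltgtP (chA y z yA zA)) yz => [yz _ | zy _ | _ //].
    exact: (free31_gap F lt_xy yz xp zp).
  exact: (free31_gap F xz zy xp yp).
exact: (free31_gap F zx lt_xy zp yp).
Qed.

Lemma chain_max A x :
  is_chain A -> x \in A -> exists2 m, m \in A & {in A, forall y, y <= m}.
Proof.
move=> chA xA; pose below y := #|[set z | z < y]|.
case: (@arg_maxnP _ x [in A] below xA) => m mA m_max; exists m => // y yA.
case: (comparable_leP (chA y m yA mA)) => // lt_my.
have: (below m < below y)%N.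
  apply: proper_card; apply/properP; split; last by exists m; rewrite !inE ?lt_my ?ltxx.
  by apply/subsetP => z; rewrite !inE => /lt_trans; apply.
by move: (m_max y yA); rewrite /= leqNgt => /negP.
Qed.

End Poset.

Definition is_inl (A B : Type) (u : A + B) : bool := if u is inl _ then true else false.

Section IncomparabilityGraph.
Variables (disp : Order.disp_t) (T : finPOrderType disp) (C D : {set T}).
Local Notation e := (incRel C D).

Lemma incV_inl c : (inl c \in incV C D) = (c \in C).
Proof.
rewrite in_setU (mem_imset _ _ inl_inj); case: imsetP => [[d _ //]|_]; exact: orbF.
Qed.

Lemma incV_inr d : (inr d \in incV C D) = (d \in D).
Proof. by rewrite in_setU (mem_imset _ _ inr_inj); case: imsetP => // -[]. Qed.

Lemma incRel_lr c d : e (inl c) (inr d) = [&& c \in C, d \in D & simP c d].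
Proof. by rewrite /incRel incV_inl incV_inr. Qed.

Lemma incRel_ll c c' : e (inl c) (inl c') = false.
Proof. by rewrite /incRel /= !andbF. Qed.

Lemma incRel_rr d d' : e (inr d) (inr d') = false.
Proof. by rewrite /incRel /= !andbF. Qed.

Lemma incRel_sym : symmetric e.
Proof. by move=> [u|u] [v|v]; rewrite /incRel /= andbCA. Qed.

Lemma incRel_irr : irreflexive e.
Proof. by case=> u; rewrite /incRel /= !andbF. Qed.

Lemma incRel_alternates u v : e u v -> is_inl u != is_inl v.
Proof. by case: u v => [u|u] [v|v]; rewrite /incRel /= ?andbF. Qed.

Lemma incRel_inl c w :
  e (inl c) w -> exists2 d, w = inr d & [&& c \in C, d \in D & simP c d].
Proof.
case: w => [c'|d]; first by rewrite incRel_ll.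
by rewrite incRel_lr; exists d.
Qed.

Lemma incRel_inr d w :
  e (inr d) w -> exists2 c, w = inl c & [&& c \in C, d \in D & simP c d].
Proof.
case: w => [c|d']; last by rewrite incRel_rr.
by rewrite incRel_sym incRel_lr; exists c.
Qed.

Lemma incRel_deg_le2 (F : free31 T) : is_chain C -> is_chain D ->
  forall v, (#|[set w | e v w]| <= 2)%N.
Proof.
move=> chC chD [c|d].
  have sub : [set w | e (inl c) w] \subset inr @: [set d in D | simP d c].
    apply/subsetP => w; rewrite inE => /incRel_inl [d -> /and3P [_ dD cd]].
    by apply: imset_f; rewrite inE dD simPC.
  apply: leq_trans (subset_leq_card sub) _; apply: leq_trans (leq_imset_card _ _) _.
  exact: free31_chain_simP_card.
have sub : [set w | e (inr d) w] \subset inl @: [set c in C | simP c d].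
  apply/subsetP => w; rewrite inE => /incRel_inr [c -> /and3P [cC _ cd]].
  by apply: imset_f; rewrite inE cC cd.
apply: leq_trans (subset_leq_card sub) _; apply: leq_trans (leq_imset_card _ _) _.
exact: free31_chain_simP_card.
Qed.

End IncomparabilityGraph.

Section Ladders.
Variables (disp : Order.disp_t) (T : finPOrderType disp) (C D : {set T}).
Local Notation e := (incRel C D).
Implicit Types (H : {set T + T}) (s t : seq (T + T)).

Lemma ladder_component H v : is_ladder C D H -> v \in H -> H = [set y | connect e v y].
Proof.
case=> x xV ->; case/setIdP => vV xv; apply/setP => y; rewrite [RHS]in_set.
have e_csym := sym_connect_sym (@incRel_sym _ _ C D).
have closed_V : closed e (incV C D) by apply: (intro_closed e_csym) => u w /and3P [].
apply/setIdP/idP => [[_ xy] | vy]; first by apply: connect_trans xy; rewrite e_csym.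
by rewrite -(closed_connect closed_V vy) (connect_trans xv vy).
Qed.

Lemma card_HC_count H s : uniq s -> s =i H -> #|HC H| = count (@is_inl T T) s.
Proof.
move=> uniq_s sH; rewrite -(card_imset _ (@inl_inj T T)) -size_filter.
rewrite -(card_uniqP (filter_uniq _ uniq_s)); apply: eq_card => u.
rewrite mem_filter sH; case: u => [c|d] /=; first by rewrite (mem_imset _ _ inl_inj) inE.
by apply/imsetP => -[].
Qed.

Lemma card_HD_count H s : uniq s -> s =i H -> #|HD H| = count (predC (@is_inl T T)) s.
Proof.
move=> uniq_s sH; rewrite -(card_imset _ (@inr_inj T T)) -size_filter.
rewrite -(card_uniqP (filter_uniq _ uniq_s)); apply: eq_card => u.
rewrite mem_filter sH; case: u => [c|d] /=; last by rewrite (mem_imset _ _ inr_inj) inE.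
by apply/imsetP => -[].
Qed.

Lemma ladder_balanced H x t : uniq (x :: t) -> x :: t =i H -> path e x t ->
  #|HC H| <= #|HD H|.+1 /\ #|HD H| <= #|HC H|.+1.
Proof.
move=> uniq_t tH path_t; rewrite (card_HC_count uniq_t tH) (card_HD_count uniq_t tH).
by apply: count_alternating_balanced; apply: sub_path path_t => u v /incRel_alternates.
Qed.

Lemma ladder_square (F : free31 T) H : is_chain C -> is_chain D -> is_ladder C D H ->
  {in H, forall u, #|[set w | e u w]| = 2} ->
  exists c1 c2 d1 d2, [/\ inl c1 \in H, c1 != c2, d1 != d2 &
    [/\ e (inl c1) (inr d1), e (inl c1) (inr d2), e (inl c2) (inr d1) & e (inl c2) (inr d2)]].
Proof.
move=> chC chD ladH deg2.
have closedH u w : u \in H -> e u w -> w \in H.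
  by move=> uH uw; rewrite (ladder_component ladH uH) inE connect1.
have nbr u : u \in H -> exists w, e u w.
  move=> uH; have /card_gt0P [w] : 0 < #|[set w | e u w]| by rewrite deg2.
  by rewrite inE; exists w.
have HC_sub : {subset HC H <= C}.
  by move=> c; rewrite inE => /nbr [w /incRel_inl [d _ /and3P []]].
have [c0 Hc0] : exists c, inl c \in H.
  have [x xV defH] := ladH; have: x \in H by rewrite defH inE xV connect0.
  case: x {xV defH} => [c|d] Hx; first by exists c.
  have [w dw] := nbr _ Hx; have [c wE _] := incRel_inr dw.
  by exists c; rewrite -wE (closedH _ _ Hx dw).
have chHC : is_chain (HC H) by move=> a b /HC_sub aC /HC_sub bC; apply: chC.
have Hc0' : c0 \in HC H by rewrite inE.
have [cm] := chain_max chHC Hc0'; rewrite inE => Hcm cm_max.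
have below d : e (inl cm) (inr d) -> exists2 c, (c < cm)%O & e (inl c) (inr d).
  move=> cm_d; have Hd := closedH _ _ Hcm cm_d.
  have d_cm : e (inr d) (inl cm) by rewrite incRel_sym.
  have [w dw wcm] := deg2_other (deg2 _ Hd) d_cm.
  have [c wE _] := incRel_inr dw; rewrite wE (inj_eq inl_inj) in dw wcm.
  exists c; last by rewrite incRel_sym.
  by rewrite lt_neqAle wcm cm_max // inE (closedH _ _ Hd dw).
have simP_of c d : e (inl c) (inr d) -> simP c d by rewrite incRel_lr => /and3P [].
have C_of c d : e (inl c) (inr d) -> c \in C by rewrite incRel_lr => /and3P [].
have [w1 cm_w1] := nbr _ Hcm; have [d1 w1E _] := incRel_inl cm_w1.
rewrite w1E in cm_w1; have [w2 cm_w2 w21] := deg2_other (deg2 _ Hcm) cm_w1.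
have [d2 w2E _] := incRel_inl cm_w2; rewrite w2E (inj_eq inr_inj) in cm_w2 w21.
have [c1 c1_cm c1_d1] := below _ cm_w1; have [c2 c2_cm c2_d2] := below _ cm_w2.
(* c1 < c2 < cm with c1, cm ~ d1 is a (3+1); symmetrically for c2 < c1. *)
have c12 : c1 = c2.
  case: (comparable_ltgtP (chC _ _ (C_of _ _ c1_d1) (C_of _ _ c2_d2))) => // [lt12 | lt21].
    by case: (free31_gap F lt12 c2_cm (simP_of _ _ c1_d1) (simP_of _ _ cm_w1)).
  by case: (free31_gap F lt21 c1_cm (simP_of _ _ c2_d2) (simP_of _ _ cm_w2)).
subst c2; exists cm, c1, d1, d2.
by split=> //; rewrite eq_sym ?(lt_eqF c1_cm).
Qed.

End Ladders.

Local Open Scope order_scope.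

Theorem mainTheorem13 (disp : Order.disp_t) (T : finPOrderType disp)
  (C D : {set T}) (H : {set T + T}) :
  free31 T -> is_chain C -> is_chain D -> is_ladder C D H ->
  (induces_C4 (incRel C D) H \/ induces_path (incRel C D) H) /\
  (#|HC H| <= #|HD H|.+1)%N /\ (#|HD H| <= #|HC H|.+1)%N.
Proof.
move=> F chC chD ladH; have deg_le2 := incRel_deg_le2 F chC chD.
have [e_sym e_irr] := (@incRel_sym _ _ C D, @incRel_irr _ _ C D).
case: (boolP [exists v in H, #|[set w | incRel C D v w]| <= 1]%N).
  case/exists_inP => v0 Hv0 deg_v0; rewrite (ladder_component ladH Hv0).
  have [t [path_t uniq_t tE adj_t]] :=
    component_induced_path e_sym e_irr deg_le2 deg_v0.
  by split; [right; exists (v0 :: t) | exact: ladder_balanced path_t].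
move/exists_inPn => deg_gt1.
have deg2 : {in H, forall u, #|[set w | incRel C D u w]| = 2}.
  by move=> u /deg_gt1; rewrite -ltnNge => gt1; apply/eqP; rewrite eqn_leq deg_le2.
have [c1 [c2 [d1 [d2 [Hc1 c12 d12 [e11 e12 e21 e22]]]]]] :=
  ladder_square F chC chD ladH deg2.
have c12' : inl c1 != inl c2 :> T + T by rewrite (inj_eq inl_inj).
have d12' : inr d1 != inr d2 :> T + T by rewrite (inj_eq inr_inj).
have SH : [:: inl c1; inr d1; inl c2; inr d2] =i H.
  rewrite (ladder_component ladH Hc1); apply: K22_component => //.
  by rewrite -(ladder_component ladH Hc1).
split.
  left; apply: (K22_induces_C4 e_sym e_irr c12' d12' e11 e12 e21 e22) SH.
    by rewrite incRel_ll.
  by rewrite incRel_rr.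
have uniq_S := K22_uniq e_irr c12' d12' e11 e12 e21 e22.
apply: (ladder_balanced (C := C) (D := D) uniq_S SH).
by rewrite /= e11 e_sym e21 e22.
Qed.
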